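(* Let $M(n,r)\subseteq S_0(n,r)$ be the subspace spanned by all open orbits $e_A$. For any $j\in\{1,\dots,n\}$, let $\lambda=r\alpha_j$ (the composition with $r$ in position $j$ and $0$ elsewhere). Then the two-sided ideal of $S_0(n,r)$ generated by $k_\lambda$ equals $M(n,r)$. Consequently $M(n,r)$ equals the two-sided ideal generated by all $k_\lambda$ with $\lambda$ having exactly one nonzero entry.
   Context: Setup: Fix positive integers $n,r$ and a field $k$. $\Lambda(n,r)$ is the set of compositions of $r$ into $n$ nonnegative parts; $\alpha_j$ is the $j$-th unit vector. $\Theta(n,r)$ is the set of $n\times n$ nonnegative integer matrices with entry sum $r$, with row vector $\mathrm{ro}(A)$ and column vector $\mathrm{co}(A)$ (vectors of row and column sums). For an $r$-dimensional space $V$ (over a finite or algebraically closed field), $\mathcal F_\lambda$ denotes the variety of flags $0=V_0\subseteq\cdots\subseteq V_n=V$ with $\dim V_i/V_{i-1}=\lambda_i$; $GL(V)$-orbits $e_A$ on pairs of flags correspond to $A\in\Theta(n,r)$ via $a_{ij}=\dim(V_i\cap V'_j)-\dim(V_i\cap V'_{j-1}+V_{i-1}\cap V'_j)$, and $e_A\subseteq\mathcal F_{\mathrm{ro}(A)}\times\mathcal F_{\mathrm{co}(A)}$; $e_A$ is open if it is open in $\mathcal F_{\mathrm{ro}(A)}\times\mathcal F_{\mathrm{co}(A)}$. The $0$-Schur algebra $S_0(n,r)$ (specialization at $q=0$ of the $q$-Schur algebra, tensored with $k$) has basis $\{e_A\}$ with $e_Ae_B=0$ if $\mathrm{co}(A)\neq\mathrm{ro}(B)$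 and otherwise $e_Ae_B=e_C$, $e_C$ the unique open orbit among pairs $(f,h)$ such that $(f,g)\in e_A,(g,h)\in e_B$ for some $g$. $k_\lambda=e_{\mathrm{diag}(\lambda)}$. *)

From HB Require Import structures.
From mathcomp Require Import all_boot all_order all_algebra.
Set Implicit Arguments. Unset Strict Implicit. Unset Printing Implicit Defensive.
Import GRing.Theory.

(* Theta(n,r): n x n matrices of nonnegative integers with entry sum r
   (entries are automatically <= r). *)
Definition Theta (n r : nat) :=
  {A : {ffun 'I_n * 'I_n -> 'I_r.+1} | (\sum_p (A p : nat)) == r}.

Definition entry n r (A : Theta n r) (a b : 'I_n) : nat := val A (a, b).

Definition ro n r (A : Theta n r) (a : 'I_n) : nat := \sum_b entry A a b.
Definition co n r (A : Theta n r) (b : 'I_n) : nat := \sum_a entry A a b.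

Definition psum n (lam : 'I_n -> nat) (i : 'I_n.+1) : nat :=
  \sum_(a : 'I_n | a < i) lam a.

(* dA i j = dim (V_i \cap V'_j) for a pair of flags in the orbit e_A,
   i, j = 0..n *)
Definition dimcap n r (A : Theta n r) (i j : 'I_n.+1) : nat :=
  \sum_(a : 'I_n | a < i) \sum_(b : 'I_n | b < j) entry A a b.

(* e_A is open in F_ro(A) x F_co(A): generic position, i.e.
   dim (V_i \cap V'_j) = max(0, dim V_i + dim V'_j - r) for all i, j. *)
Definition openA n r (A : Theta n r) : bool :=
  [forall i, forall j,
     dimcap A i j == (psum (ro A) i + psum (co A) j) - r].

(* Generic (open-orbit) product of orbits: if co(A) = ro(B), the open orbit
   e_C in the composite e_A o e_B is the orbit whose intersection dimensions
   are the minimal possible ones,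
     dim(V_i \cap V''_j) = max_k (dA(i,k) + dB(k,j) - dim V'_k),
   (equivalently, C is the double coset of the Demazure product of the
   longest representatives of A and B). *)
Definition genprod n r (A B : Theta n r) : option (Theta n r) :=
  if [forall b, co A b == ro B b] then
    [pick C : Theta n r | [forall i, forall j,
        dimcap C i j ==
        \max_(k < n.+1) (dimcap A i k + dimcap B k j - psum (co A) k)]]
  else None.

(* The 0-Schur algebra S_0(n,r) over k: the k-vector space with basis
   {e_A : A in Theta(n,r)}, elements are coordinate functions. *)
Definition S0 (k : fieldType) (n r : nat) := {ffun Theta n r -> k}.

Definition eb (k : fieldType) n r (A : Theta n r) : S0 k n r :=
  [ffun C => if C == A then 1%R else 0%R].

Definition mulS (k : fieldType) n r (f g : S0 k n r) : S0 k n r :=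
  [ffun C => \sum_A \sum_B
     (if genprod A B == Some C then (f A * g B)%R else 0%R)]%R.

Definition kdiag (k : fieldType) n r (lam : 'I_n -> nat) : S0 k n r :=
  [ffun C => if [forall a, forall b,
                  entry C a b == (if a == b then lam a else 0)]
             then 1%R else 0%R].

Definition ralpha n (r : nat) (j : 'I_n) : 'I_n -> nat :=
  fun a => if a == j then r else 0.

Definition ideal_gen (k : fieldType) n r (P : S0 k n r -> Prop)
  (y : S0 k n r) : Prop :=
  exists (m : nat) (a x b : 'I_m -> S0 k n r),
    (forall i, P (x i)) /\ y = (\sum_i mulS (mulS (a i) (x i)) (b i))%R.

Definition inM (k : fieldType) n r (y : S0 k n r) : Prop :=
  forall A : Theta n r, y A != 0%R -> openA A.

Definition one_part_comp n (r : nat) (lam : 'I_n -> nat) : Prop :=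
  \sum_a lam a = r /\ #|[set a | lam a != 0%N]| = 1%N.

From HB Require Import structures.
From mathcomp Require Import all_boot all_order all_algebra.
From mathcomp Require Import zify.
Set Implicit Arguments. Unset Strict Implicit. Unset Printing Implicit Defensive.
Import GRing.Theory.

(* Call a composition a single block if its partial sums only take the values
   0 and r; the compositions r alpha_j are of this kind.  When co(A) = ro(B) is
   a single block, the maximum defining the generic product is attained at the
   last index, so e_A e_B is the open orbit with
   dim (V_i \cap V''_j) = dim V_i + dim V''_j - r.  Hence every product
   e_A k_lam e_B with lam a single block is open: e_A k_lam has column
   composition lam, so its product with e_B is again of this form.  Conversely
   an open e_C equals e_A k_(r alpha_j) e_B, where the j-th column of A carries
   the row sums of C and the j-th row of B its column sums. *)

Lemma leq_sum_sub (I : finType) (P Q : pred I) (F : I -> nat) :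
  (forall i, P i -> Q i) -> \sum_(i | P i) F i <= \sum_(i | Q i) F i.
Proof.
move=> PQ; rewrite [X in _ <= X]big_mkcond [X in X <= _]big_mkcond /=.
by apply: leq_sum => i _; case Pi: (P i) => //; rewrite PQ.
Qed.

Lemma sum_if_eq n (F : 'I_n -> nat) (j : 'I_n) :
  \sum_a (if a == j then F a else 0) = F j.
Proof. by rewrite -big_mkcond big_pred1_eq. Qed.

Section Margins.
Variables n r : nat.
Implicit Types (A C D : Theta n r) (lam : 'I_n -> nat).

Lemma sum_entry A : \sum_a \sum_b entry A a b = r.
Proof.
case: A => f f_sum; rewrite /entry /= pair_bigA /=.
by apply: etrans (eqP f_sum); apply: eq_bigr => -[].
Qed.

Lemma sum_ro A : \sum_a ro A a = r.
Proof. exact: sum_entry. Qed.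

Lemma sum_co A : \sum_b co A b = r.
Proof. by rewrite /co exchange_big sum_entry. Qed.

Lemma dimcap_col_max A i : dimcap A i ord_max = psum (ro A) i.
Proof. by apply: eq_bigr => a _; apply: eq_bigl => b; rewrite ltn_ord. Qed.

Lemma dimcap_row_max A j : dimcap A ord_max j = psum (co A) j.
Proof.
rewrite /dimcap exchange_big /=.
by apply: eq_bigr => b _; apply: eq_bigl => a; rewrite ltn_ord.
Qed.

Lemma psum_max lam : psum lam ord_max = \sum_a lam a.
Proof. by apply: eq_bigl => a; rewrite ltn_ord. Qed.

Lemma psum_ro_max A : psum (ro A) ord_max = r.
Proof. by rewrite psum_max sum_ro. Qed.

Lemma psum_co_max A : psum (co A) ord_max = r.
Proof. by rewrite psum_max sum_co. Qed.

Lemma eq_psum lam mu : lam =1 mu -> psum lam =1 psum mu.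
Proof. by move=> eq_lm i; apply: eq_bigr => a _. Qed.

Lemma dimcap_le_psum_ro A i j : dimcap A i j <= psum (ro A) i.
Proof.
rewrite -dimcap_col_max; apply: leq_sum => a _.
by apply: leq_sum_sub => b _; rewrite ltn_ord.
Qed.

Lemma dimcap_le_psum_co A i j : dimcap A i j <= psum (co A) j.
Proof.
by rewrite -dimcap_row_max; apply: leq_sum_sub => a _; rewrite ltn_ord.
Qed.

Lemma psum_le_dimcap A i j : psum (ro A) i + psum (co A) j <= dimcap A i j + r.
Proof.
rewrite -dimcap_col_max -dimcap_row_max -[X in _ <= _ + X](sum_entry A) /dimcap.
rewrite !(big_mkcond (fun a : 'I_n => a < i)) /=.
rewrite (big_mkcond (fun a : 'I_n => a < ord_max)) /= -!big_split /=.
apply: leq_sum => a _; rewrite ltn_ord.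
have -> : \sum_(b < n | b < n) entry A a b = \sum_b entry A a b.
  by apply: eq_bigl => b; rewrite ltn_ord.
case: (a < i); first by rewrite addnC.
by rewrite !add0n leq_sum_sub.
Qed.

Lemma sum_lt_inordS lam (a : 'I_n) :
  \sum_(b : 'I_n | b < (inord a.+1 : 'I_n.+1)) lam b =
  \sum_(b : 'I_n | b < (inord a : 'I_n.+1)) lam b + lam a.
Proof.
have a_lt : a < n.+1 by rewrite ltnS ltnW.
have aS_lt : a.+1 < n.+1 by rewrite ltnS.
rewrite (bigD1 a) /=; last by rewrite inordK.
rewrite addnC; congr (_ + _).
by apply: eq_bigl => b; rewrite !inordK // ltnS ltn_neqAle andbC.
Qed.

Lemma dimcap_inj C D : dimcap C =2 dimcap D -> C = D.
Proof.
move=> eqCD; apply: val_inj; apply/ffunP => -[a b]; apply: val_inj => /=.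
have eq_row (m : 'I_n.+1) : \sum_(b : 'I_n | b < m) entry C a b =
                \sum_(b : 'I_n | b < m) entry D a b.
  have := eqCD (inord a.+1) m; rewrite /dimcap !sum_lt_inordS.
  by have := eqCD (inord a) m; rewrite /dimcap => ->; apply: addnI.
by have := eq_row (inord b.+1); rewrite !sum_lt_inordS eq_row; apply: addnI.
Qed.

End Margins.

Section GenericProduct.
Variables n r : nat.
Implicit Types (A B C : Theta n r) (lam : 'I_n -> nat).

Definition single_block lam := forall i, psum lam i = 0 \/ psum lam i = r.

Lemma single_block_ralpha (j : 'I_n) : single_block (ralpha r j).
Proof.
move=> i; rewrite /psum /ralpha; case: (ltnP j i) => [j_lt_i | i_le_j].
  by right; rewrite (bigD1 j) //= eqxx big1 ?addn0 // => a /andP [_ /negbTE ->].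
left; apply: big1 => a a_lt_i; case: eqP => // a_eq_j.
by move: (leq_trans a_lt_i i_le_j); rewrite a_eq_j ltnn.
Qed.

Lemma dimcap_single_block A i j : single_block (co A) ->
  dimcap A i j = psum (ro A) i + psum (co A) j - r.
Proof.
move=> /(_ j) block_j.
have := dimcap_le_psum_ro A i j; have := dimcap_le_psum_co A i j.
have := psum_le_dimcap A i j.
have : psum (ro A) i <= r.
  by have := dimcap_le_psum_co A i ord_max; rewrite dimcap_col_max psum_co_max.
by case: block_j => ->; lia.
Qed.

Lemma max_dimcap_single_block A B i j : co A =1 ro B -> single_block (co A) ->
  \max_(k < n.+1) (dimcap A i k + dimcap B k j - psum (co A) k)
  = psum (ro A) i + psum (co B) j - r.
Proof.
move=> coA_roB block; apply/eqP; rewrite eqn_leq; apply/andP; split.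
  apply/bigmax_leqP => k _.
  have := dimcap_le_psum_ro A i k; have := dimcap_le_psum_co A i k.
  have := dimcap_le_psum_co B k j; have := dimcap_le_psum_ro B k j.
  rewrite -(eq_psum coA_roB).
  by case: (block k) => ->; lia.
apply: leq_trans (leq_bigmax ord_max).
by rewrite dimcap_col_max dimcap_row_max psum_co_max.
Qed.

Lemma genprodE A B C : genprod A B = Some C <->
  co A =1 ro B /\
  forall i j, dimcap C i j =
    \max_(k < n.+1) (dimcap A i k + dimcap B k j - psum (co A) k).
Proof.
rewrite /genprod; split.
  case: ifP => [/forallP coA_roB|] //.
  case: pickP => // D /forallP dimD [<-]; split=> [b|i j]; first exact/eqP.
  by move/forallP: (dimD i) => /(_ j) /eqP.
move=> [coA_roB dimC].
have -> : [forall b, co A b == ro B b] by apply/forallP => b; apply/eqP.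
case: pickP => [D /forallP dimD | no_pick].
  congr Some; apply: dimcap_inj => i j; rewrite dimC.
  by move/forallP: (dimD i) => /(_ j) /eqP.
move/negbT/negP: (no_pick C); case.
by apply/forallP => i; apply/forallP => j; apply/eqP.
Qed.

Lemma genprod_single_blockE A B C : co A =1 ro B -> single_block (co A) ->
  genprod A B = Some C <->
  forall i j, dimcap C i j = psum (ro A) i + psum (co B) j - r.
Proof.
move=> coA_roB block; rewrite genprodE; split=> [[_ dimC] i j | dimC].
  by rewrite dimC max_dimcap_single_block.
by split=> // i j; rewrite max_dimcap_single_block.
Qed.

Lemma psum_genprod A B C : genprod A B = Some C -> single_block (co A) ->
  psum (ro C) =1 psum (ro A) /\ psum (co C) =1 psum (co B).
Proof.
move=> AB_C block; have /genprodE [coA_roB _] := AB_C.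
have /(genprod_single_blockE _ coA_roB block) dimC := AB_C.
split=> i.
  by rewrite -dimcap_col_max dimC psum_co_max addnK.
by rewrite -dimcap_row_max dimC psum_ro_max addKn.
Qed.

Lemma open_genprod A B C : genprod A B = Some C -> single_block (co A) ->
  openA C.
Proof.
move=> AB_C block; have /genprodE [coA_roB _] := AB_C.
have [roC coC] := psum_genprod AB_C block.
move/(genprod_single_blockE _ coA_roB block): AB_C => dimC.
by apply/forallP => i; apply/forallP => j; rewrite dimC roC coC.
Qed.

End GenericProduct.

Section Constructions.
Variables (n r : nat) (j : 'I_n).
Implicit Types (lam : 'I_n -> nat).

Section OfFunction.
Variables (f : 'I_n -> 'I_n -> nat) (sum_f : \sum_a \sum_b f a b = r).

Lemma leq_entry_sum a b : f a b <= r.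
Proof.
rewrite -sum_f (bigD1 a) //= (bigD1 b) //= -addnA; exact: leq_addr.
Qed.

Lemma theta_of_subproof :
  \sum_p (([ffun p => inord (f p.1 p.2)] : {ffun 'I_n * 'I_n -> 'I_r.+1}) p : nat)
  == r.
Proof.
apply/eqP; rewrite -[RHS]sum_f pair_bigA /=; apply: eq_bigr => -[a b] _.
by rewrite ffunE inordK // ltnS; apply: leq_entry_sum.
Qed.

Definition theta_of : Theta n r :=
  exist _ [ffun p => inord (f p.1 p.2)] theta_of_subproof.

Lemma entry_theta_of a b : entry theta_of a b = f a b.
Proof. by rewrite /entry /= ffunE inordK // ltnS; apply: leq_entry_sum. Qed.

End OfFunction.

Section Shapes.
Variables (lam : 'I_n -> nat) (sum_lam : \sum_a lam a = r).

Lemma sum_diag_subproof :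
  \sum_a \sum_b (if a == b then lam a else 0) = r.
Proof.
rewrite -sum_lam; apply: eq_bigr => a _.
by under eq_bigr => b _ do rewrite eq_sym; rewrite sum_if_eq.
Qed.

Lemma sum_col_subproof : \sum_a \sum_b (if b == j then lam a else 0) = r.
Proof. by rewrite -sum_lam; apply: eq_bigr => a _; rewrite sum_if_eq. Qed.

Lemma sum_row_subproof : \sum_a \sum_b (if a == j then lam b else 0) = r.
Proof. by rewrite exchange_big /=; apply: sum_col_subproof. Qed.

Definition diag_theta : Theta n r := theta_of sum_diag_subproof.
Definition col_theta : Theta n r := theta_of sum_col_subproof.
Definition row_theta : Theta n r := theta_of sum_row_subproof.

Lemma ro_diag_theta : ro diag_theta =1 lam.
Proof.
move=> a; rewrite /ro; under eq_bigr => b _ do rewrite entry_theta_of eq_sym.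
exact: sum_if_eq.
Qed.

Lemma co_diag_theta : co diag_theta =1 lam.
Proof.
move=> b; rewrite /co; under eq_bigr => a _ do rewrite entry_theta_of.
exact: sum_if_eq.
Qed.

Lemma ro_col_theta : ro col_theta =1 lam.
Proof.
move=> a; rewrite /ro; under eq_bigr => b _ do rewrite entry_theta_of.
exact: sum_if_eq.
Qed.

Lemma co_col_theta : co col_theta =1 ralpha r j.
Proof.
move=> b; rewrite /co /ralpha; under eq_bigr => a _ do rewrite entry_theta_of.
by case: (b == j); rewrite ?sum_lam ?big1.
Qed.

Lemma ro_row_theta : ro row_theta =1 ralpha r j.
Proof.
move=> a; rewrite /ro /ralpha; under eq_bigr => b _ do rewrite entry_theta_of.
by case: (a == j); rewrite ?sum_lam ?big1.
Qed.

Lemma co_row_theta : co row_theta =1 lam.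
Proof.
move=> b; rewrite /co; under eq_bigr => a _ do rewrite entry_theta_of.
exact: (sum_if_eq (fun=> lam b)).
Qed.

End Shapes.

Lemma sum_ralpha : \sum_a ralpha r j a = r.
Proof. exact: (sum_if_eq (fun=> r)). Qed.

Lemma single_block_co_col_theta lam (sum_lam : \sum_a lam a = r) :
  single_block r (co (col_theta sum_lam)).
Proof.
by move=> i; rewrite (eq_psum (co_col_theta _)); apply: single_block_ralpha.
Qed.

Lemma genprod_col_diag lam (sum_lam : \sum_a lam a = r) :
  genprod (col_theta sum_lam) (diag_theta sum_ralpha) =
  Some (col_theta sum_lam).
Proof.
have coA_roE : co (col_theta sum_lam) =1 ro (diag_theta sum_ralpha).
  by move=> b; rewrite co_col_theta ro_diag_theta.
apply/(genprod_single_blockE _ coA_roE (single_block_co_col_theta _)) => i i'.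
rewrite dimcap_single_block; last exact: single_block_co_col_theta.
by congr (_ + _ - _); apply: eq_psum => b; rewrite co_col_theta co_diag_theta.
Qed.

Lemma genprod_col_row (C : Theta n r) : openA C ->
  genprod (col_theta (sum_ro C)) (row_theta (sum_co C)) = Some C.
Proof.
move=> /forallP openC.
have coA_roB : co (col_theta (sum_ro C)) =1 ro (row_theta (sum_co C)).
  by move=> b; rewrite co_col_theta ro_row_theta.
apply/(genprod_single_blockE _ coA_roB (single_block_co_col_theta _)) => i i'.
move/forallP: (openC i) => /(_ i') /eqP ->.
by rewrite (eq_psum (ro_col_theta _)) (eq_psum (co_row_theta _)).
Qed.

End Constructions.

Section Algebra.
Local Open Scope ring_scope.
Variables (k : fieldType) (n r : nat).
Implicit Types (A B C D E : Theta n r) (f g y : S0 k n r).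

(* {ffun _ -> k} carries no scaling action, so scaled basis vectors c e_A are
   built directly. *)
Definition scaled_eb (c : k) A : S0 k n r :=
  [ffun C => if C == A then c else 0].

Lemma scaled_eb0 A : scaled_eb 0 A = 0.
Proof. by apply/ffunP => C; rewrite !ffunE if_same. Qed.

Lemma sum_scaled_eb y : y = \sum_C scaled_eb (y C) C.
Proof.
apply/ffunP => C; rewrite sum_ffunE (bigD1 C) //= ffunE eqxx big1 ?addr0 //.
by move=> D /negbTE D_C; rewrite ffunE eq_sym D_C.
Qed.

Lemma sum_neq0 (I : finType) (F : I -> k) :
  \sum_i F i != 0 -> exists i, F i != 0.
Proof.
move=> sum_F; case: (pickP (fun i => F i != 0)) => [i Fi | F0].
  by exists i.
move: sum_F; rewrite big1 ?eqxx // => i _.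
by apply/eqP; rewrite -[_ == 0]negbK F0.
Qed.

Lemma mulS_supp f g C : mulS f g C != 0 ->
  exists A B, [/\ f A != 0, g B != 0 & genprod A B = Some C].
Proof.
rewrite ffunE => /sum_neq0 [A] /sum_neq0 [B].
case: (genprod A B =P Some C) => [AB_C | _]; last by rewrite eqxx.
by rewrite mulf_eq0 negb_or => /andP [fA gB]; exists A, B.
Qed.

Lemma mul0S g : mulS 0 g = 0.
Proof.
apply/ffunP => C; rewrite !ffunE big1 // => A _.
by rewrite big1 // => B _; rewrite ffunE mul0r if_same.
Qed.

Lemma mulS_scaled_eb c d A B C : genprod A B = Some C ->
  mulS (scaled_eb c A) (scaled_eb d B) = scaled_eb (c * d) C.
Proof.
move=> AB_C; apply/ffunP => C'; rewrite !ffunE.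
rewrite (bigD1 A) //= [X in _ + X]big1 => [|A' A'_A]; last first.
  by apply: big1 => B' _; rewrite !ffunE (negbTE A'_A) mul0r if_same.
rewrite addr0 (bigD1 B) //= [X in _ + X]big1 => [|B' B'_B]; last first.
  by rewrite !ffunE (negbTE B'_B) mulr0 if_same.
by rewrite addr0 !ffunE !eqxx AB_C (inj_eq (@Some_inj _)) eq_sym.
Qed.

Lemma inM_sum (I : finType) (F : I -> S0 k n r) :
  (forall i, inM (F i)) -> inM (\sum_i F i).
Proof. by move=> MF C; rewrite sum_ffunE => /sum_neq0 [i]; apply: MF. Qed.

Lemma kdiag_supp (lam : 'I_n -> nat) E :
  kdiag k r lam E != 0 -> ro E =1 lam /\ co E =1 lam.
Proof.
rewrite ffunE; case: ifP => [/forallP diagE _ | _]; last by rewrite eqxx.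
have entryE a b : entry E a b = if a == b then lam a else 0%N.
  by apply/eqP; move/forallP: (diagE a).
split=> a; rewrite /ro /co; under eq_bigr do rewrite entryE.
  by under eq_bigr do rewrite eq_sym; rewrite (sum_if_eq (fun=> lam a)).
exact: sum_if_eq.
Qed.

Lemma kdiag_diag_theta (lam : 'I_n -> nat) (sum_lam : \sum_a lam a = r) :
  kdiag k r lam = scaled_eb 1 (diag_theta sum_lam).
Proof.
apply/ffunP => C; rewrite !ffunE.
have [->|C_ne] := eqVneq C (diag_theta sum_lam).
  by case: forallP => // -[] a; apply/forallP => b; rewrite entry_theta_of.
case: forallP => // diagC; case/eqP: C_ne; apply: dimcap_inj => i i'.
apply: eq_bigr => a _; apply: eq_bigr => b _.
by rewrite entry_theta_of; apply/eqP; move/forallP: (diagC a).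
Qed.

Lemma inM_mulS_kdiag (lam : 'I_n -> nat) f g : single_block r lam ->
  inM (mulS (mulS f (kdiag k r lam)) g).
Proof.
move=> block C /mulS_supp [D [B [/mulS_supp [A [E [_ kE AE_D]]] _ DB_C]]].
have [roE coE] := kdiag_supp kE.
have /genprodE [coA_roE _] := AE_D.
have blockA : single_block r (co A).
  by move=> i; rewrite (eq_psum coA_roE) (eq_psum roE).
have [_ coD] := psum_genprod AE_D blockA.
by apply: (open_genprod DB_C) => i; rewrite coD (eq_psum coE).
Qed.

Lemma ideal_gen_kdiag_inM (P : S0 k n r -> Prop) y :
  (forall x, P x -> exists lam, single_block r lam /\ x = kdiag k r lam) ->
  ideal_gen P y -> inM y.
Proof.
move=> P_kdiag [m [f [x [g [Px ->]]]]]; apply: inM_sum => i.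
by have [lam [block ->]] := P_kdiag _ (Px i); apply: inM_mulS_kdiag.
Qed.

Lemma mulS_col_kdiag_row (j : 'I_n) (c : k) C : openA C ->
  mulS (mulS (scaled_eb c (col_theta j (sum_ro C))) (kdiag k r (ralpha r j)))
       (scaled_eb 1 (row_theta j (sum_co C))) = scaled_eb c C.
Proof.
move=> openC; rewrite (kdiag_diag_theta (sum_ralpha r j)).
by rewrite (mulS_scaled_eb _ _ (genprod_col_diag _ _)) mulr1
  (mulS_scaled_eb _ _ (genprod_col_row _ openC)) mulr1.
Qed.

Lemma inM_ideal_gen_ralpha (j : 'I_n) y : inM y ->
  ideal_gen (fun x => x = kdiag k r (ralpha r j)) y.
Proof.
move=> My; exists #|{: Theta n r}|.
exists (fun i => scaled_eb (y (enum_val i)) (col_theta j (sum_ro (enum_val i)))).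
exists (fun=> kdiag k r (ralpha r j)).
exists (fun i => scaled_eb 1 (row_theta j (sum_co (enum_val i)))).
split=> //; rewrite [LHS]sum_scaled_eb.
rewrite (big_enum_val (fun C => scaled_eb (y C) C)).
apply: eq_bigr => i _.
have [openC | closedC] := boolP (openA (enum_val i)).
  by rewrite mulS_col_kdiag_row.
have -> : y (enum_val i) = 0 by apply/eqP; apply: contraNT closedC => /My.
by rewrite !scaled_eb0 !mul0S.
Qed.

End Algebra.

Lemma one_part_compP n r (lam : 'I_n -> nat) :
  one_part_comp r lam -> exists j, lam =1 ralpha r j.
Proof.
move=> [sum_lam /eqP/cards1P [j supp_lam]]; exists j.
have lam0 a : a != j -> lam a = 0.
  move=> a_j; apply/eqP; apply: contraNT a_j => lam_a.
  by rewrite -in_set1 -supp_lam inE.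
move=> a; rewrite /ralpha; case: eqP => [-> | /eqP]; last exact: lam0.
by rewrite -sum_lam (bigD1 j) //= big1 ?addn0 // => b /lam0.
Qed.

Lemma one_part_comp_ralpha n r (j : 'I_n) :
  0 < r -> one_part_comp r (ralpha r j).
Proof.
move=> r_gt0; split; first exact: sum_ralpha.
apply/eqP/cards1P; exists j; apply/setP => a; rewrite !inE /ralpha.
by case: (a == j); rewrite // -lt0n.
Qed.

Theorem mainTheorem4 (k : fieldType) (n r : nat) (j : 'I_n) (hr : (0 < r)%N) :
  (forall y : S0 k n r,
     ideal_gen (fun x => x = kdiag k r (ralpha r j)) y <-> inM y) /\
  (forall y : S0 k n r,
     ideal_gen (fun x => exists lam : 'I_n -> nat,
                  one_part_comp r lam /\ x = kdiag k r lam) y <-> inM y).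
Proof.
split=> y; split.
- apply: ideal_gen_kdiag_inM => x ->.
  by exists (ralpha r j); split=> //; apply: single_block_ralpha.
- exact: inM_ideal_gen_ralpha.
- apply: ideal_gen_kdiag_inM => x [lam [/one_part_compP [j' lam_eq] ->]].
  exists lam; split=> // i.
  by rewrite (eq_psum lam_eq); apply: single_block_ralpha.
- move=> /(inM_ideal_gen_ralpha j) [m [f [x [g [x_eq y_eq]]]]].
  exists m, f, x, g; split=> // i; exists (ralpha r j).
  by rewrite x_eq; split=> //; apply: one_part_comp_ralpha.
Qed.
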